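(* Let $R$ be a generalized Reedy category, $R_0$ a strict Reedy category and $c:R_0\to R$ a functor satisfying Condition (C). Then the projection $p:\mathbf{D}_R\to R$ is absolutely dense, i.e. the precomposition functor $p^*:\mathbf{Set}^{R}\to\mathbf{Set}^{\mathbf{D}_R}$ is fully faithful.
   Context: A generalized Reedy category (in the sense of Cisinski and Berger–Moerdijk) is a small category $R$ with a degree function $\deg:\mathrm{Ob}(R)\to\mathbb{N}$ and two wide subcategories $R_+,R_-$, both containing all isomorphisms, such that: non-invertible maps of $R_+$ raise the degree, non-invertible maps of $R_-$ lower the degree, isomorphisms preserve the degree; $R_+\cap R_-$ is the groupoid of isomorphisms of $R$; every morphism factors as a map of $R_-$ followed by a map of $R_+$, uniquely up to unique isomorphism; and if $\theta$ is an isomorphism and $f\in R_-$ with $\theta f = f$, then $\theta$ is an identity. A (strict) Reedy category is one in which the only isomorphisms are identities. Condition (C) on a functor $c:R_0\to R$ from a strict Reedy category $R_0$: for every arrow $f:a\to b$ in $R$ there exist an arrow $k:x\to y$ in $R_0$ and isomorphisms $w:a\cong c(x)$, $w':b\cong c(y)$ in $R$ with $w'\circ f = c(k)\circ w$. Construction of $\mathbf{D}_R$: let $\mathbf{F}$ denote the free-category comonad on $\mathbf{Cat}$ ($\mathbf{F}(C)$ is the free category on the underlying graph of $C$, whose morphisms are paths of composable arrows of $C$, with counit $\mathbf{F}(C)\to C$ given by composition). Let $\mathbf{F}_\simeq(R)$ be the pushout in $\mathbf{Cat}$ of $R_0 \xleftarrow{\text{counit}} \mathbf{F}(R_0) \xrightarrow{\mathbf{F}(c)}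 \mathbf{F}(R)$; the functors $c:R_0\to R$ and the counit $\mathbf{F}(R)\to R$ induce a functor $p_0:\mathbf{F}_\simeq(R)\to R$. Call a ''free isomorphism'' the image in $\mathbf{F}_\simeq(R)$ of a path of length one in $R$ whose single arrow is an isomorphism of $R$. The twisted arrow category $\mathbf{Tw}(C)$ of a category $C$ has as objects the arrows $u:a\to b$ of $C$, and a morphism from $u:a\to b$ to $u':a'\to b'$ is a pair $(s:a'\to a,\ t:b\to b')$ with $u'=t\circ u\circ s$. Then $\mathbf{D}_R$ is the full subcategory of $\mathbf{Tw}(\mathbf{F}_\simeq(R))$ on the arrows of the form $x\to z\to y$ where $x\to z$ is the image of a map of $R_0$ and $z\to y$ is either an identity or a free isomorphism. The projection $p:\mathbf{D}_R\to R$ sends an object $u:a\to b$ to $p_0(b)$ and a morphism $(s,t)$ to $p_0(t)$. *)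

(* Categories are small categories whose hom-types carry an
   equivalence relation [heq] (setoid-enriched categories); this is needed to
   represent quotient categories such as the pushout F_~(R) without quotient
   types.  An ordinary category is the case heq = eq. *)
From Stdlib Require Import RelationClasses Morphisms Setoid PeanoNat.

Record Category : Type := {
  Ob :> Type;
  Hom : Ob -> Ob -> Type;
  heq : forall a b, Hom a b -> Hom a b -> Prop;
  heq_equiv : forall a b, Equivalence (heq a b);
  idm : forall a, Hom a a;
  comp : forall a b c, Hom b c -> Hom a b -> Hom a c;
  comp_proper : forall a b c (f f' : Hom b c) (g g' : Hom a b),
      heq b c f f' -> heq a b g g' -> heq a c (comp a b c f g) (comp a b c f' g');
  comp_idl : forall a b (f : Hom a b), heq a b (comp a b b (idm b) f) f;
  comp_idr : forall a b (f : Hom a b), heq a b (comp a a b f (idm a)) f;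
  comp_assoc : forall a b c d (f : Hom c d) (g : Hom b c) (h : Hom a b),
      heq a d (comp a b d (comp b c d f g) h) (comp a c d f (comp a b c g h))
}.

Arguments Hom {C} a b : rename.
Arguments heq {C a b} f g : rename.
Arguments idm {C} a : rename.
Arguments comp {C a b c} f g : rename.
Arguments heq_equiv {C} a b : rename.
Arguments comp_idl {C a b} f : rename.
Arguments comp_idr {C a b} f : rename.
Arguments comp_assoc {C a b c d} f g h : rename.

Infix "≈" := heq (at level 70).
Notation "f ∘ g" := (comp f g) (at level 40, left associativity).

Global Existing Instance heq_equiv.
Global Instance comp_Proper (C : Category) (a b c : C) :
  Proper (heq ==> heq ==> heq) (@comp C a b c).
Proof. intros f f' Hf g g' Hg. now apply comp_proper. Qed.

Definition is_iso {C : Category} {a b : C} (f : Hom a b) : Prop :=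
  exists g : Hom b a, g ∘ f ≈ idm a /\ f ∘ g ≈ idm b.

Definition is_identity {C : Category} {a b : C} (f : Hom a b) : Prop :=
  exists e : a = b, f ≈ eq_rect a (fun x => Hom a x) (idm a) b e.

Record Functor (C D : Category) : Type := {
  fobj :> C -> D;
  fmap : forall a b : C, Hom a b -> Hom (fobj a) (fobj b);
  fmap_proper : forall a b (f g : Hom a b), f ≈ g -> fmap a b f ≈ fmap a b g;
  fmap_id : forall a, fmap a a (idm a) ≈ idm (fobj a);
  fmap_comp : forall a b c (f : Hom b c) (g : Hom a b),
      fmap a c (f ∘ g) ≈ fmap b c f ∘ fmap a b g
}.
Arguments fobj {C D} F _ : rename.
Arguments fmap {C D} F {a b} f : rename.
Arguments fmap_proper {C D} F {a b f g} _ : rename.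
Arguments fmap_id {C D} F a : rename.
Arguments fmap_comp {C D} F {a b c} f g : rename.

Definition Fcomp {C D E : Category} (G : Functor D E) (F : Functor C D) :
  Functor C E.
Proof.
  refine {| fobj := fun a => G (F a);
            fmap := fun a b f => fmap G (fmap F f) |}.
  - intros a b f g H. now apply fmap_proper, fmap_proper.
  - intros a. rewrite (fmap_proper G (fmap_id F a)). apply fmap_id.
  - intros a b c f g. rewrite (fmap_proper G (fmap_comp F f g)). apply fmap_comp.
Defined.

(** * Generalized Reedy categories (Cisinski, Berger--Moerdijk) *)

Record WideIsoSub (C : Category) : Type := {
  wmem : forall a b : C, Hom a b -> Prop;
  wmem_proper : forall a b (f g : Hom a b), f ≈ g -> wmem a b f -> wmem a b g;
  wmem_iso : forall a b (f : Hom a b), is_iso f -> wmem a b f;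
  wmem_comp : forall a b c (f : Hom b c) (g : Hom a b),
      wmem b c f -> wmem a b g -> wmem a c (f ∘ g)
}.
Arguments wmem {C} S {a b} f : rename.

Record GenReedy (R : Category) : Type := {
  deg : R -> nat;
  Rplus : WideIsoSub R;
  Rminus : WideIsoSub R;
  plus_raise : forall a b (f : Hom a b),
      wmem Rplus f -> ~ is_iso f -> deg a < deg b;
  minus_lower : forall a b (f : Hom a b),
      wmem Rminus f -> ~ is_iso f -> deg b < deg a;
  iso_deg : forall a b (f : Hom a b), is_iso f -> deg a = deg b;
  plus_minus_iso : forall a b (f : Hom a b),
      wmem Rplus f -> wmem Rminus f -> is_iso f;
  factor_exists : forall a b (f : Hom a b),
      exists (z : R) (g : Hom a z) (h : Hom z b),
        wmem Rminus g /\ wmem Rplus h /\ h ∘ g ≈ f;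
  factor_unique : forall a b (f : Hom a b)
      (z : R) (g : Hom a z) (h : Hom z b) (z' : R) (g' : Hom a z') (h' : Hom z' b),
      wmem Rminus g -> wmem Rplus h -> h ∘ g ≈ f ->
      wmem Rminus g' -> wmem Rplus h' -> h' ∘ g' ≈ f ->
      exists theta : Hom z z',
        is_iso theta /\ theta ∘ g ≈ g' /\ h' ∘ theta ≈ h /\
        (forall theta' : Hom z z', is_iso theta' ->
             theta' ∘ g ≈ g' -> h' ∘ theta' ≈ h -> theta' ≈ theta);
  iso_fix_minus : forall a b (f : Hom a b) (theta : Hom b b),
      wmem Rminus f -> is_iso theta -> theta ∘ f ≈ f -> theta ≈ idm b
}.

(** A (strict) Reedy category: a generalized Reedy category whose only
    isomorphisms are identities. *)
Definition only_identity_isos (C : Category) : Prop :=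
  forall (a b : C) (f : Hom a b), is_iso f -> is_identity f.

Definition conditionC {R0 R : Category} (c : Functor R0 R) : Prop :=
  forall (a b : R) (f : Hom a b),
    exists (x y : R0) (k : Hom x y) (w : Hom a (c x)) (w' : Hom b (c y)),
      is_iso w /\ is_iso w' /\ w' ∘ f ≈ fmap c k ∘ w.

(** * Paths (morphisms of the free category F(C)) *)

Inductive path (C : Category) : C -> C -> Type :=
| pnil : forall a : C, path C a a
| pcons : forall a b c : C, Hom b c -> path C a b -> path C a c.
Arguments pnil {C} a.
Arguments pcons {C a b c} f p.

(** concatenation: [papp q p] is "q after p" *)
Fixpoint papp {C : Category} {a b c : C} (q : path C b c) : path C a b -> path C a c :=
  match q in path _ b' c' return path C a b' -> path C a c' with
  | pnil _ => fun p => p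
  | pcons f q' => fun p => pcons f (papp q' p)
  end.

Definition single {C : Category} {a b : C} (f : Hom a b) : path C a b :=
  pcons f (pnil a).

Fixpoint map_path {C D : Category} (F : Functor C D) {a b : C} (p : path C a b) :
  path D (F a) (F b) :=
  match p with
  | pnil a => pnil (F a)
  | pcons f q => pcons (fmap F f) (map_path F q)
  end.

(** the counit F(C) -> C: composition of a path *)
Fixpoint pcompose {C : Category} {a b : C} (p : path C a b) : Hom a b :=
  match p with
  | pnil a => idm a
  | pcons f q => f ∘ pcompose q
  end.

Lemma papp_nil_r {C : Category} {a b : C} (p : path C a b) : papp p (pnil a) = p.
Proof. induction p; simpl; congruence. Qed.

Lemma papp_assoc {C : Category} {a b c d : C} (r : path C c d) (q : path C b c)
  (p : path C a b) : papp r (papp q p) = papp (papp r q) p.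
Proof. induction r; simpl; congruence. Qed.

Lemma pcompose_app {C : Category} {a b c : C} (q : path C b c) (p : path C a b) :
  pcompose (papp q p) ≈ pcompose q ∘ pcompose p.
Proof.
  induction q; simpl.
  - symmetry; apply comp_idl.
  - rewrite IHq. symmetry; apply comp_assoc.
Qed.

Lemma pcompose_map {C D : Category} (F : Functor C D) {a b : C} (p : path C a b) :
  pcompose (map_path F p) ≈ fmap F (pcompose p).
Proof.
  induction p; simpl.
  - symmetry; apply fmap_id.
  - rewrite IHp. symmetry; apply fmap_comp.
Qed.

(** * The pushout F_~(R) of  R0 <- F(R0) -> F(R)

   Since the counit F(R0) -> R0 is the identity on objects and full, the
   pushout in Cat is the quotient of F(R) (objects of R, paths in R) by the
   congruence generated by  F(c)(pi) ~ [c(eps pi)]  for every path pi of R0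
   (eps = composition in R0).  Equality of paths in F(R) itself is
   componentwise [≈]. *)

Section Pushout.
Context {R0 R : Category} (c : Functor R0 R).

Inductive fsim : forall a b : R, path R a b -> path R a b -> Prop :=
| fsim_refl : forall a b (p : path R a b), fsim a b p p
| fsim_sym : forall a b (p q : path R a b), fsim a b p q -> fsim a b q p
| fsim_trans : forall a b (p q r : path R a b),
    fsim a b p q -> fsim a b q r -> fsim a b p r
| fsim_arrow : forall a b (f g : Hom a b), f ≈ g -> fsim a b (single f) (single g)
| fsim_rel : forall (x y : R0) (pi : path R0 x y),
    fsim (c x) (c y) (map_path c pi) (single (fmap c (pcompose pi)))
| fsim_congl : forall a b d (r : path R b d) (p q : path R a b),
    fsim a b p q -> fsim a d (papp r p) (papp r q)
| fsim_congr : forall a b d (p q : path R b d) (s : path R a b),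
    fsim b d p q -> fsim a d (papp p s) (papp q s).

Definition FsimCat : Category.
Proof.
  refine {| Ob := Ob R; Hom := path R; heq := fsim; idm := pnil;
            comp := fun a b d q p => papp q p |}.
  - intros a b. split.
    + intros p; apply fsim_refl.
    + intros p q; apply fsim_sym.
    + intros p q r; apply fsim_trans.
  - intros a b d f f' g g' Hf Hg.
    eapply fsim_trans. apply fsim_congr, Hf. apply fsim_congl, Hg.
  - intros a b f. apply fsim_refl.
  - intros a b f. simpl. rewrite papp_nil_r. apply fsim_refl.
  - intros a b d e f g h. simpl. rewrite papp_assoc. apply fsim_refl.
Defined.

Definition p0 : Functor FsimCat R.
Proof.
  refine {| fobj := fun a : FsimCat => (a : R);
            fmap := fun a b (p : path R a b) => pcompose p |}.
  - intros a b f g H. induction H; simpl.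
    + reflexivity.
    + now symmetry.
    + etransitivity; eassumption.
    + now rewrite H.
    + rewrite pcompose_map, comp_idr. reflexivity.
    + rewrite !pcompose_app, IHfsim. reflexivity.
    + rewrite !pcompose_app, IHfsim. reflexivity.
  - intros a. reflexivity.
  - intros a b d f g. apply pcompose_app.
Defined.

Definition free_iso {a b : R} (v : @Hom FsimCat a b) : Prop :=
  exists f : Hom a b, is_iso f /\ v ≈ (single f : @Hom FsimCat a b).

End Pushout.

Record TwOb (C : Category) : Type := { tdom : C; tcod : C; tarr : Hom tdom tcod }.
Arguments tdom {C} _.
Arguments tcod {C} _.
Arguments tarr {C} _.

Record TwHom (C : Category) (u u' : TwOb C) : Type := {
  tws : Hom (tdom u') (tdom u);
  twt : Hom (tcod u) (tcod u');
  tw_eq : tarr u' ≈ twt ∘ (tarr u ∘ tws)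
}.
Arguments tws {C u u'} _.
Arguments twt {C u u'} _.

Definition tw_id {C : Category} (u : TwOb C) : TwHom C u u.
Proof.
  refine {| tws := idm (tdom u); twt := idm (tcod u) |}.
  rewrite comp_idl, comp_idr. reflexivity.
Defined.

Definition tw_comp {C : Category} {u v w : TwOb C} (g : TwHom C v w) (f : TwHom C u v) :
  TwHom C u w.
Proof.
  refine {| tws := tws f ∘ tws g; twt := twt g ∘ twt f |}.
  rewrite (tw_eq _ _ _ g), (tw_eq _ _ _ f). rewrite !comp_assoc. reflexivity.
Defined.

Definition Tw (C : Category) : Category.
Proof.
  refine {| Ob := TwOb C; Hom := TwHom C;
            heq := fun u u' f g => tws f ≈ tws g /\ twt f ≈ twt g;
            idm := tw_id;
            comp := fun u v w g f => tw_comp g f |}.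
  - intros u u'. split.
    + intros f; split; reflexivity.
    + intros f g [H1 H2]; split; now symmetry.
    + intros f g h [H1 H2] [H3 H4]; split; etransitivity; eassumption.
  - intros u v w f f' g g' [H1 H2] [H3 H4]; simpl; split.
    + now rewrite H1, H3.
    + now rewrite H2, H4.
  - intros u v f; simpl; split; [apply comp_idr | apply comp_idl].
  - intros u v f; simpl; split; [apply comp_idl | apply comp_idr].
  - intros u v w x f g h; simpl; split; [symmetry|]; apply comp_assoc.
Defined.

Definition TwCod (C : Category) : Functor (Tw C) C.
Proof.
  refine {| fobj := fun u : Tw C => tcod u;
            fmap := fun u v (f : TwHom C u v) => twt f |}.
  - intros u v f g [H1 H2]; exact H2.
  - intros u; reflexivity.
  - intros u v w f g; reflexivity.
Defined.

Definition FullSub (C : Category) (P : C -> Prop) : Category.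
Proof.
  refine {| Ob := { x : C | P x };
            Hom := fun x y => @Hom C (proj1_sig x) (proj1_sig y);
            heq := fun x y f g => f ≈ g;
            idm := fun x => idm (proj1_sig x);
            comp := fun x y z f g => f ∘ g |}.
  - intros a b d f f' g g' Hf Hg; exact (comp_proper C _ _ _ f f' g g' Hf Hg).
  - intros; apply comp_idl.
  - intros; apply comp_idr.
  - intros; apply comp_assoc.
Defined.

Definition FullInc (C : Category) (P : C -> Prop) : Functor (FullSub C P) C.
Proof.
  refine {| fobj := fun x : FullSub C P => proj1_sig x;
            fmap := fun x y f => f |}.
  - intros; assumption.
  - intros; reflexivity.
  - intros; reflexivity.
Defined.

Section DR.
Context {R0 R : Category} (c : Functor R0 R).

(** u : a -> b is of the form  x -> z -> y  with x -> z the image of a map k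
    of R0 (i.e. [c k] in F_~(R)) and z -> y an identity or a free iso. *)
Definition isD (o : TwOb (FsimCat c)) : Prop :=
  exists (x0 z0 : R0) (k : Hom x0 z0)
         (v : @Hom (FsimCat c) (c z0) (tcod o)) (e : tdom o = c x0),
    (is_identity v \/ free_iso c v) /\
    eq_rect (tdom o) (fun a => @Hom (FsimCat c) a (tcod o)) (tarr o) (c x0) e
      ≈ (v ∘ (single (fmap c k) : @Hom (FsimCat c) (c x0) (c z0))).

Definition D_R : Category := FullSub (Tw (FsimCat c)) isD.

Definition proj_p : Functor D_R R :=
  Fcomp (p0 c) (Fcomp (TwCod (FsimCat c)) (FullInc (Tw (FsimCat c)) isD)).

End DR.

Record SetFunctor (C : Category) : Type := {
  sobj : C -> Type;
  smap : forall a b : C, Hom a b -> sobj a -> sobj b;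
  smap_proper : forall a b (f g : Hom a b), f ≈ g -> forall x, smap a b f x = smap a b g x;
  smap_id : forall a x, smap a a (idm a) x = x;
  smap_comp : forall a b d (f : Hom b d) (g : Hom a b) x,
      smap a d (f ∘ g) x = smap b d f (smap a b g x)
}.
Arguments sobj {C} F _ : rename.
Arguments smap {C} F {a b} f x : rename.

Record NatTrans {C : Category} (F G : SetFunctor C) : Type := {
  ncomp : forall a, sobj F a -> sobj G a;
  nnat : forall a b (f : Hom a b) x, ncomp b (smap F f x) = smap G f (ncomp a x)
}.
Arguments ncomp {C F G} _ a x : rename.

Definition nat_eq {C : Category} {F G : SetFunctor C} (al be : NatTrans F G) : Prop :=
  forall a x, ncomp al a x = ncomp be a x.

Definition precomp {D C : Category} (p : Functor D C) (F : SetFunctor C) : SetFunctor D.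
Proof.
  refine {| sobj := fun d => sobj F (p d);
            smap := fun a b f x => smap F (fmap p f) x |}.
  - intros a b f g H x. apply smap_proper, fmap_proper, H.
  - intros a x. rewrite (smap_proper _ F _ _ _ _ (fmap_id p a)). apply smap_id.
  - intros a b d f g x. rewrite (smap_proper _ F _ _ _ _ (fmap_comp p f g)).
    apply smap_comp.
Defined.

Definition whisker {D C : Category} (p : Functor D C) {F G : SetFunctor C}
  (al : NatTrans F G) : NatTrans (precomp p F) (precomp p G).
Proof.
  refine (@Build_NatTrans D (precomp p F) (precomp p G)
            (fun d x => ncomp al (p d) x) _).
  intros a b f x. simpl. apply nnat.
Defined.

Definition absolutely_dense {D C : Category} (p : Functor D C) : Prop :=
  forall F G : SetFunctor C,
    (forall al be : NatTrans F G,
        nat_eq (whisker p al) (whisker p be) -> nat_eq al be) /\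
    (forall ga : NatTrans (precomp p F) (precomp p G),
        exists al : NatTrans F G, nat_eq (whisker p al) ga).

(* Every object b of R is isomorphic to some c x, and every arrow of R is, up to such
   isomorphisms, an arrow c k.  A transformation γ : p^*F -> p^*G is therefore governed by
   its components β_x at the identity objects id_(c x) of D_R.  These are natural along
   the arrows c k and along the isomorphisms of R, because D_R contains the objects c k
   and the free isomorphisms, which receive maps from both identity objects at their ends.
   Conjugating β_x by any isomorphism b ≅ c x thus gives a well-defined natural
   transformation α : F -> G.  Finally every object of D_R receives a map from some
   id_(c z) that p sends to an isomorphism, which forces p^*α = γ; the same covering by
   isomorphisms gives faithfulness. *)
From Stdlib Require Import RelationClasses Morphisms Setoid ClassicalEpsilon.

Definition inverse_pair {C : Category} {a b : C} (u : Hom a b) (u' : Hom b a) : Prop :=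
  u' ∘ u ≈ idm a /\ u ∘ u' ≈ idm b.

Lemma inverse_pair_sym {C : Category} {a b : C} (u : Hom a b) (u' : Hom b a) :
  inverse_pair u u' -> inverse_pair u' u.
Proof. intros [H1 H2]; split; assumption. Qed.

Lemma inverse_pair_comp {C : Category} {a b d : C}
  (f : Hom a b) (f' : Hom b a) (g : Hom b d) (g' : Hom d b) :
  inverse_pair f f' -> inverse_pair g g' -> inverse_pair (g ∘ f) (f' ∘ g').
Proof.
  intros [Hf1 Hf2] [Hg1 Hg2]; split.
  - rewrite comp_assoc, <- (comp_assoc g' g f), Hg1, comp_idl; exact Hf1.
  - rewrite comp_assoc, <- (comp_assoc f f' g'), Hf2, comp_idl; exact Hg2.
Qed.

Lemma is_iso_inverse_pair {C : Category} {a b : C} (u : Hom a b) :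
  is_iso u <-> exists u', inverse_pair u u'.
Proof. split; intros [u' Hu]; exists u'; exact Hu. Qed.

Lemma is_iso_proper {C : Category} {a b : C} (f g : Hom a b) :
  f ≈ g -> is_iso f -> is_iso g.
Proof. intros H [h Hh]. exists h. now rewrite <- H. Qed.

Lemma smap_inverse_pair {C : Category} (F : SetFunctor C) {a b : C}
  (u : Hom a b) (u' : Hom b a) x :
  inverse_pair u u' -> smap F u' (smap F u x) = x.
Proof.
  intros [H _]. rewrite <- smap_comp, (smap_proper _ F _ _ _ _ H). apply smap_id.
Qed.

Lemma ncomp_conj {C : Category} {F G : SetFunctor C} (al : NatTrans F G)
  {b b' : C} (u : Hom b b') (u' : Hom b' b) x :
  inverse_pair u u' -> ncomp al b x = smap G u' (ncomp al b' (smap F u x)).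
Proof. intros Hu. rewrite nnat. symmetry. now apply smap_inverse_pair. Qed.

Lemma precomp_faithful {D C : Category} (p : Functor D C)
  (Hdense : forall b : C, exists (d : D) (u : Hom b (p d)) (u' : Hom (p d) b),
      inverse_pair u u')
  (F G : SetFunctor C) (al be : NatTrans F G) :
  nat_eq (whisker p al) (whisker p be) -> nat_eq al be.
Proof.
  intros H b x. destruct (Hdense b) as (d & u & u' & Hu).
  rewrite (ncomp_conj al u u' x Hu), (ncomp_conj be u u' x Hu).
  f_equal. apply (H d).
Qed.

Section ConditionC.
Context {R0 R : Category} (c : Functor R0 R) (HC : conditionC c).

Lemma conditionC_iso_cover (b : R) :
  exists t : {x : R0 & (Hom b (c x) * Hom (c x) b)%type},
    inverse_pair (fst (projT2 t)) (snd (projT2 t)).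
Proof.
  destruct (HC b b (idm b)) as (x & _ & _ & w & _ & Hw & _).
  destruct (proj1 (is_iso_inverse_pair w) Hw) as [w' Hw'].
  now exists (existT _ x (w, w')).
Qed.

End ConditionC.

Section IdentityObjects.
Context {R0 R : Category} (c : Functor R0 R).

Definition arrow_tw {a b : R} (f : Hom a b) : TwOb (FsimCat c) :=
  {| tdom := (a : FsimCat c); tcod := (b : FsimCat c);
     tarr := (single f : @Hom (FsimCat c) a b) |}.

Definition id_tw (x : R0) : TwOb (FsimCat c) :=
  {| tdom := (c x : FsimCat c); tcod := (c x : FsimCat c);
     tarr := (pnil (c x) : @Hom (FsimCat c) (c x) (c x)) |}.

Lemma isD_id (x : R0) : isD c (id_tw x).
Proof.
  exists x, x, (idm x), (pnil (c x)), eq_refl. split.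
  - left. exists eq_refl. reflexivity.
  - exact (fsim_rel c x x (pnil x)).
Qed.

Definition id_ob (x : R0) : D_R c := exist _ (id_tw x) (isD_id x).

Lemma isD_arrow_fmap (x y : R0) (k : Hom x y) : isD c (arrow_tw (fmap c k)).
Proof.
  exists x, y, k, (pnil (c y)), eq_refl. split.
  - left. exists eq_refl. reflexivity.
  - reflexivity.
Qed.

Lemma isD_arrow_iso (x x' : R0) (w : Hom (c x) (c x')) :
  is_iso w -> isD c (arrow_tw w).
Proof.
  intros Hw. exists x, x, (idm x), (single w), eq_refl. split.
  - right. now exists w.
  - apply (fsim_congl c _ _ _ (single w) (pnil (c x)) (single (fmap c (idm x)))).
    exact (fsim_rel c x x (pnil x)).
Qed.

Definition id_to_arrow_dom {x y : R0} (f : Hom (c x) (c y)) :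
  TwHom (FsimCat c) (id_tw x) (arrow_tw f) :=
  Build_TwHom (FsimCat c) (id_tw x) (arrow_tw f) (pnil (c x)) (single f)
    (fsim_refl _ _ _ _).

Definition id_to_arrow_cod {x y : R0} (f : Hom (c x) (c y)) :
  TwHom (FsimCat c) (id_tw y) (arrow_tw f) :=
  Build_TwHom (FsimCat c) (id_tw y) (arrow_tw f) (single f) (pnil (c y))
    (fsim_refl _ _ _ _).

Lemma is_iso_p0_identity_or_free_iso {a b : R} (v : @Hom (FsimCat c) a b) :
  is_identity v \/ free_iso c v -> is_iso (fmap (p0 c) v).
Proof.
  intros [[e He] | [f [Hf He]]].
  - apply (is_iso_proper _ _ (symmetry (fmap_proper (p0 c) He))).
    destruct e. exists (idm (a : R)). split; apply comp_idl.
  - apply (is_iso_proper f); [| exact Hf].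
    rewrite (fmap_proper (p0 c) He). symmetry. apply comp_idr.
Qed.

(* The factorisation x -> z -> y witnessing [isD] is itself a map id_(c z) -> d of D_R. *)
Lemma DR_covered_by_id_ob (d : D_R c) :
  exists (z : R0) (m : @Hom (D_R c) (id_ob z) d), is_iso (fmap (proj_p c) m).
Proof.
  destruct d as [[a b u] Hd]. pose proof Hd as (x & z & k & v & e & Hv & Heq).
  simpl in e, Heq. subst a. simpl in Heq.
  exists z, (Build_TwHom (FsimCat c) (id_tw z) (Build_TwOb _ _ _ u) (single (fmap c k)) v Heq).
  now apply is_iso_p0_identity_or_free_iso.
Qed.

End IdentityObjects.

Section Fullness.
Context {R0 R : Category} (c : Functor R0 R) (HC : conditionC c) (F G : SetFunctor R)
  (ga : NatTrans (precomp (proj_p c) F) (precomp (proj_p c) G)).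

Definition beta (x : R0) : sobj F (c x) -> sobj G (c x) := ncomp ga (id_ob c x).

(* Both identity objects at the ends of f map into the object f of D_R. *)
Lemma beta_natural_arrow {x y : R0} (f : Hom (c x) (c y)) (Hf : isD c (arrow_tw c f)) a :
  beta y (smap F f a) = smap G f (beta x a).
Proof.
  set (U := exist _ (arrow_tw c f) Hf : D_R c).
  pose proof (nnat _ _ ga (id_ob c x) U (id_to_arrow_dom c f) a) as Hdom.
  pose proof (nnat _ _ ga (id_ob c y) U (id_to_arrow_cod c f) (smap F f a)) as Hcod.
  simpl in Hdom, Hcod. rewrite smap_id, (smap_id _ G) in Hcod.
  unfold beta. rewrite <- Hcod.
  rewrite (smap_proper _ F _ _ _ _ (comp_idr f)) in Hdom.
  rewrite Hdom. apply smap_proper, comp_idr.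
Qed.

Lemma beta_natural_fmap {x y : R0} (k : Hom x y) a :
  beta y (smap F (fmap c k) a) = smap G (fmap c k) (beta x a).
Proof. apply beta_natural_arrow, isD_arrow_fmap. Qed.

Lemma beta_natural_iso {x x' : R0} (w : Hom (c x) (c x')) a :
  is_iso w -> beta x' (smap F w a) = smap G w (beta x a).
Proof. intros Hw. now apply beta_natural_arrow, isD_arrow_iso. Qed.

Definition beta_conj {b : R} (x : R0) (u : Hom b (c x)) (u' : Hom (c x) b)
  (a : sobj F b) : sobj G b :=
  smap G u' (beta x (smap F u a)).

Lemma beta_conj_indep {b : R} {x y : R0} (u : Hom b (c x)) (u' : Hom (c x) b)
  (v : Hom b (c y)) (v' : Hom (c y) b) a :
  inverse_pair u u' -> inverse_pair v v' -> beta_conj x u u' a = beta_conj y v v' a.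
Proof.
  intros Hu Hv. unfold beta_conj.
  pose proof (inverse_pair_comp u' u v v' (inverse_pair_sym _ _ Hu) Hv) as Hw.
  assert (Ev : smap F v a = smap F (v ∘ u') (smap F u a)).
  { rewrite <- smap_comp. apply smap_proper.
    rewrite comp_assoc, (proj1 Hu). symmetry. apply comp_idr. }
  rewrite Ev, beta_natural_iso by (apply is_iso_inverse_pair; eexists; exact Hw).
  rewrite <- (smap_comp _ G). apply smap_proper.
  rewrite <- comp_assoc, (proj1 Hv). symmetry. apply comp_idl.
Qed.

Definition iso_cover (b : R) :=
  proj1_sig (constructive_indefinite_description _ (conditionC_iso_cover c HC b)).

Definition alpha (b : R) : sobj F b -> sobj G b :=
  beta_conj (projT1 (iso_cover b)) (fst (projT2 (iso_cover b))) (snd (projT2 (iso_cover b))).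

Lemma alpha_spec {b : R} {x : R0} (u : Hom b (c x)) (u' : Hom (c x) b) a :
  inverse_pair u u' -> alpha b a = beta_conj x u u' a.
Proof.
  intros Hu. apply beta_conj_indep; [| exact Hu].
  exact (proj2_sig (constructive_indefinite_description _ (conditionC_iso_cover c HC b))).
Qed.

Lemma alpha_natural (b b' : R) (f : Hom b b') a :
  alpha b' (smap F f a) = smap G f (alpha b a).
Proof.
  destruct (HC b b' f) as (x & y & k & u & v & Hu & Hv & Hf).
  destruct (proj1 (is_iso_inverse_pair u) Hu) as [u' Hu'].
  destruct (proj1 (is_iso_inverse_pair v) Hv) as [v' Hv'].
  rewrite (alpha_spec v v' _ Hv'), (alpha_spec u u' _ Hu'). unfold beta_conj.
  rewrite <- (smap_comp _ F), (smap_proper _ F _ _ _ _ Hf), smap_comp.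
  rewrite beta_natural_fmap, <- !(smap_comp _ G). apply smap_proper.
  transitivity (v' ∘ (fmap c k ∘ u) ∘ u').
  - rewrite !comp_assoc, (proj2 Hu'), comp_idr. reflexivity.
  - rewrite <- Hf, <- comp_assoc, (proj1 Hv'), comp_idl. reflexivity.
Qed.

Definition alpha_nat : NatTrans F G := Build_NatTrans R F G alpha alpha_natural.

Lemma whisker_alpha_nat : nat_eq (whisker (proj_p c) alpha_nat) ga.
Proof.
  intros d a. destruct (DR_covered_by_id_ob c d) as (z & m & Hm).
  destruct (proj1 (is_iso_inverse_pair _) Hm) as [w Hw].
  change (alpha (proj_p c d) a = ncomp ga d a).
  rewrite (alpha_spec w _ a (inverse_pair_sym _ _ Hw)). unfold beta_conj, beta.
  transitivity (ncomp ga d (smap F (fmap (proj_p c) m) (smap F w a))).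
  - symmetry. exact (nnat _ _ ga _ d m _).
  - f_equal. exact (smap_inverse_pair F _ _ a (inverse_pair_sym _ _ Hw)).
Qed.

End Fullness.

Theorem mainTheorem2 (R : Category) (HR : GenReedy R)
  (R0 : Category) (HR0 : GenReedy R0) (HR0strict : only_identity_isos R0)
  (c : Functor R0 R) (HC : conditionC c) :
  absolutely_dense (proj_p c).
Proof.
  intros F G. split.
  - apply precomp_faithful. intros b.
    destruct (conditionC_iso_cover c HC b) as [[x [u u']] Hu].
    now exists (id_ob c x), u, u'.
  - intros ga. exists (alpha_nat c HC F G ga). apply whisker_alpha_nat.
Qed.
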